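(* Let $P$ and $Q$ be disjoint polytopes in $\mathbb{R}^d$ such that $P$ and $-Q$ are Minkowski equivalent. Then there is a hyperplane separating $P$ and $Q$ which is parallel to a facet of $P$.
   Context: Two polytopes are Minkowski equivalent if they have the same normal fan (the collection of normal cones of their faces). Here $-Q = \{-q : q \in Q\}$. A hyperplane $H$ separates $P$ and $Q$ if $P$ and $Q$ lie in the two opposite closed half-spaces determined by $H$ (here it can be taken to be strict separation: there is a normal vector $y$ and a real $c$ with $\max_{x\in P}\langle x,y\rangle < c < \min_{x\in Q}\langle x,y\rangle$); it is parallel to a facet of $P$ if its normal vector is normal to that facet. *)

From HB Require Import structures.
From mathcomp Require Import all_boot all_order all_algebra.
From mathcomp Require Import boolp classical_sets reals.
Set Implicit Arguments. Unset Strict Implicit. Unset Printing Implicit Defensive.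
Import Order.TTheory GRing.Theory Num.Theory.
Local Open Scope ring_scope.
Local Open Scope classical_set_scope.

Section Polytopes.
Variables (R : realType) (d : nat).
Local Notation vec := 'rV[R]_d.

Definition dotv (x y : vec) : R := \sum_(i < d) x 0 i * y 0 i.

Definition conv_rows n (V : 'M[R]_(n, d)) : set vec :=
  [set x | exists w : 'rV[R]_n,
     (forall i, 0 <= w 0 i) /\ \sum_(i < n) w 0 i = 1 /\ x = w *m V].

(* a (nonempty) polytope: convex hull of finitely many points *)
Definition is_polytope (P : set vec) : Prop :=
  exists n (V : 'M[R]_(n.+1, d)), P = conv_rows V.

Definition oppset (Q : set vec) : set vec := [set x | Q (- x)].

Definition face_in (P : set vec) (y : vec) : set vec :=
  [set x | P x /\ forall z, P z -> dotv z y <= dotv x y].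

Definition is_face (P F : set vec) : Prop :=
  F = set0 \/ exists y, F = face_in P y.

Definition normal_cone (P F : set vec) : set vec :=
  [set y | forall x z, F x -> P z -> dotv z y <= dotv x y].

Definition normal_fan (P : set vec) : set (set vec) :=
  [set N | exists y, N = normal_cone P (face_in P y)].

Definition minkowski_equivalent (P Q : set vec) : Prop :=
  normal_fan P = normal_fan Q.

(* S contains n+1 affinely independent points *)
Definition affdim_ge (S : set vec) (n : nat) : Prop :=
  exists (x0 : vec) (X : 'M[R]_(n, d)),
    S x0 /\ (forall i, S (x0 + row i X)) /\ \rank X = n.

(* the affine hull of S has dimension k (k = -1 iff S is empty) *)
Definition is_affdim (S : set vec) (k : int) : Prop :=
  match k with
  | Posz n => affdim_ge S n /\ ~ affdim_ge S n.+1
  | Negz 0 => S = set0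
  | Negz _ => False
  end.

Definition is_facet (P F : set vec) : Prop :=
  is_face P F /\ exists k : int, is_affdim P k /\ is_affdim F (k - 1).

Definition strictly_separates (P Q : set vec) (y : vec) (c : R) : Prop :=
  (forall x, P x -> dotv x y < c) /\ (forall x, Q x -> c < dotv x y).

End Polytopes.

From HB Require Import structures.
From mathcomp Require Import all_boot all_order all_algebra.
From mathcomp Require Import boolp classical_sets reals.
From mathcomp Require Import ring lra.
Import Order.TTheory GRing.Theory Num.Theory.
Local Open Scope ring_scope.
Local Open Scope classical_set_scope.
Set Implicit Arguments. Unset Strict Implicit. Unset Printing Implicit Defensive.

(* P and Q being disjoint, Gordan's theorem applied to the differences of their
   vertices gives a direction y with <p, y> < <q, y> for all p in P and q in Q.
   Minkowski equivalence of P and -Q says that the normal cone of each face of P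
   is the normal cone of a face of -Q, so some q in Q minimizes <., y'> over Q for
   all y' in the normal cone of the face F of P maximizing y.  Tilting y inside
   that cone, orthogonally to F and to the segment from F to q, keeps the
   separation and strictly enlarges F.  When no such tilt exists, every direction
   orthogonal to F and to that segment is orthogonal to P, so F has codimension
   one in P: it is a facet.  The tilting may also end with y constant on P; then a
   small perturbation of y towards the normal of a facet of P (the empty face if
   P is a point) does the job. *)

Section FiniteExtrema.
Variable R : realFieldType.

Lemma exists_argmin_in (I : finType) (p : pred I) (f : I -> R) i0 : p i0 ->
  exists2 i, p i & forall j, p j -> f i <= f j.
Proof. by move=> pi0; case: (@arg_minP _ _ I i0 p f pi0) => i; exists i. Qed.

Lemma exists_argmin (I : finType) (f : I -> R) (i0 : I) : exists i, forall j, f i <= f j.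
Proof.
have [i _ i_min] := @exists_argmin_in I predT f i0 isT.
by exists i => j; apply: i_min.
Qed.

Lemma exists_argmax (I : finType) (f : I -> R) (i0 : I) : exists i, forall j, f j <= f i.
Proof.
have [i i_min] := exists_argmin (fun i => - f i) i0.
by exists i => j; rewrite -lerN2.
Qed.

Lemma exists_pos_lower_bound (I : finType) (f : I -> R) : (forall i, 0 < f i) ->
  exists2 t, 0 < t & forall i, t <= f i.
Proof.
move=> f_gt0; have inv_ge0 j : 0 <= (f j)^-1 by rewrite invr_ge0 ltW.
have s_gt0 : 0 < 1 + \sum_i (f i)^-1 by rewrite ltr_wpDr ?sumr_ge0.
exists (1 + \sum_i (f i)^-1)^-1 => [|i]; first by rewrite invr_gt0.
rewrite -[f i]invrK lef_pV2 ?posrE ?invr_gt0 // (bigD1 i) //= addrCA.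
by rewrite !ler_wpDr ?sumr_ge0.
Qed.

Lemma exists_pos_perturb (I : finType) (a b : I -> R) : (forall i, 0 < a i) ->
  exists2 t, 0 < t & forall i, 0 < a i + t * b i.
Proof.
move=> a_gt0; have nb_gt0 i : 0 < `|b i| + 1 by rewrite ltr_wpDl.
have [t t_gt0 t_le] := exists_pos_lower_bound (fun i => divr_gt0 (a_gt0 i) (nb_gt0 i)).
exists t => // i; have := t_le i; rewrite ler_pdivlMr // => t_nb.
have : t * - `|b i| <= t * b i.
  by apply: ler_wpM2l; [exact: ltW | exact: lerNnormlW].
nra.
Qed.

Lemma convex_comb_gt0 (I : finType) (c x : I -> R) :
  (forall i, 0 <= c i) -> \sum_i c i = 1 -> (forall i, 0 < x i) -> 0 < \sum_i c i * x i.
Proof.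
move=> c_ge0 c_sum x_gt0; have [t t_gt0 t_le] := exists_pos_lower_bound x_gt0.
apply: (lt_le_trans t_gt0); rewrite -[t]mul1r -c_sum mulr_suml.
by apply: ler_sum => i _; rewrite ler_wpM2l.
Qed.

End FiniteExtrema.

Section InnerProduct.
Variables (R : realType) (d : nat).
Local Notation vec := 'rV[R]_d.
Local Notation dot := (@dotv R d).

Lemma dotvC (x y : vec) : dot x y = dot y x.
Proof. by rewrite /dotv; apply: eq_bigr => i _; rewrite mulrC. Qed.

Lemma dotvDl (x y z : vec) : dot (x + y) z = dot x z + dot y z.
Proof. by rewrite /dotv -big_split; apply: eq_bigr => i _; rewrite mxE mulrDl. Qed.

Lemma dotvNl (x z : vec) : dot (- x) z = - dot x z.
Proof. by rewrite /dotv -sumrN; apply: eq_bigr => i _; rewrite mxE mulNr. Qed.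

Lemma dotvBl (x y z : vec) : dot (x - y) z = dot x z - dot y z.
Proof. by rewrite dotvDl dotvNl. Qed.

Lemma dotvZl a (x z : vec) : dot (a *: x) z = a * dot x z.
Proof. by rewrite /dotv mulr_sumr; apply: eq_bigr => i _; rewrite mxE mulrA. Qed.

Lemma dotv0l (z : vec) : dot 0 z = 0.
Proof. by rewrite /dotv big1 // => i _; rewrite mxE mul0r. Qed.

Lemma dotvDr (x y z : vec) : dot z (x + y) = dot z x + dot z y.
Proof. by rewrite !(dotvC z) dotvDl. Qed.

Lemma dotvNr (x z : vec) : dot z (- x) = - dot z x.
Proof. by rewrite !(dotvC z) dotvNl. Qed.

Lemma dotvBr (x y z : vec) : dot z (x - y) = dot z x - dot z y.
Proof. by rewrite !(dotvC z) dotvBl. Qed.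

Lemma dotvZr a (x z : vec) : dot z (a *: x) = a * dot z x.
Proof. by rewrite !(dotvC z) dotvZl. Qed.

Lemma dotv0r (z : vec) : dot z 0 = 0.
Proof. by rewrite dotvC dotv0l. Qed.

Lemma dotv_suml (I : finType) (F : I -> vec) z : dot (\sum_i F i) z = \sum_i dot (F i) z.
Proof. exact: (big_morph (fun x => dot x z) (fun x y => dotvDl x y z) (dotv0l z)). Qed.

Lemma dotv_mulmx m (w : 'rV[R]_m) (V : 'M[R]_(m, d)) y :
  dot (w *m V) y = \sum_i w 0 i * dot (row i V) y.
Proof. by rewrite mulmx_sum_row dotv_suml; apply: eq_bigr => i _; rewrite dotvZl. Qed.

Lemma dotv_row_col a b (A : 'M[R]_(a, d)) (C : 'M[R]_(d, b)) i k :
  dot (row i A) (col k C)^T = (A *m C) i k.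
Proof. by rewrite /dotv mxE; apply: eq_bigr => j _; rewrite !mxE. Qed.

Lemma dotvv_gt0 (x : vec) : x != 0 -> 0 < dot x x.
Proof.
have sq_ge0 i : 0 <= x 0 i * x 0 i by rewrite -expr2 sqr_ge0.
move=> x_neq0; rewrite lt_neqAle sumr_ge0 ?andbT //.
apply: contra x_neq0; rewrite eq_sym psumr_eq0 // => /allP x0.
apply/eqP/rowP => i; rewrite mxE.
by have := x0 i (mem_index_enum _); rewrite -expr2 sqrf_eq0 => /eqP.
Qed.

Definition sep_dir (P Q : set vec) (y : vec) : Prop :=
  forall p q, P p -> Q q -> dot p y < dot q y.

Definition minimizes_normal_cones (P Q : set vec) : Prop :=
  forall y, exists2 q, Q q & forall y', normal_cone P (face_in P y) y' ->
    forall q', Q q' -> dot q y' <= dot q' y'.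

Lemma normal_cone_face_in (P : set vec) y : normal_cone P (face_in P y) y.
Proof. by move=> x z [_ x_max]; apply: x_max. Qed.

End InnerProduct.

Section Gordan.
Variables (R : realType) (d : nat).
Local Notation vec := 'rV[R]_d.
Local Notation dot := (@dotv R d).

Definition zero_in_hull (I : finType) (a : I -> vec) : Prop :=
  exists c : I -> R, [/\ forall i, 0 <= c i, \sum_i c i = 1 & \sum_i c i *: a i = 0].

Definition perp_proj (b x : vec) : vec := x - (dot x b / dot b b) *: b.

Lemma dotv_perp_projC (b x z : vec) : dot (perp_proj b x) z = dot x (perp_proj b z).
Proof. by rewrite dotvBl dotvBr dotvZl dotvZr (dotvC b z); ring. Qed.

Lemma dotv_perp_proj (b z : vec) : b != 0 -> dot b (perp_proj b z) = 0.
Proof.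
move=> b_neq0; rewrite dotvBr dotvZr (dotvC b z) divfK ?subrr //.
by rewrite gt_eqF ?dotvv_gt0.
Qed.

Lemma zero_in_hull_of_eq0 (I : finType) (a : I -> vec) i : a i = 0 -> zero_in_hull a.
Proof.
move=> ai0; exists (fun j => (j == i)%:R); split.
- by move=> j; rewrite ler0n.
- by rewrite (bigD1 i) //= eqxx big1 ?addr0 // => j /negPf ->.
- by rewrite (bigD1 i) //= ai0 scaler0 add0r big1 // => j /negPf ->; rewrite scale0r.
Qed.

Lemma zero_in_hull_cons N (a : 'I_N.+1 -> vec) c0 (c : 'I_N -> R) :
  0 <= c0 -> (forall j, 0 <= c j) -> c0 + \sum_j c j = 1 ->
  c0 *: a ord0 + \sum_j c j *: a (lift ord0 j) = 0 -> zero_in_hull a.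
Proof.
move=> c0_ge0 c_ge0 c_sum c_comb.
pose w i := if unlift ord0 i is Some j then c j else c0.
have w0 : w ord0 = c0 by rewrite /w unlift_none.
have wS j : w (lift ord0 j) = c j by rewrite /w liftK.
exists w; split; first by move=> i; case: (unliftP ord0 i) => [j ->|->]; rewrite ?wS ?w0.
  by rewrite big_ord_recl w0; under eq_bigr do rewrite wS.
by rewrite big_ord_recl w0; under eq_bigr do rewrite wS.
Qed.

Lemma not_zero_in_hull_lift N (a : 'I_N.+1 -> vec) :
  ~ zero_in_hull a -> ~ zero_in_hull (fun j => a (lift ord0 j)).
Proof.
move=> a0 [c [c_ge0 c_sum c_comb]]; apply: a0.
by apply: (@zero_in_hull_cons _ _ 0 c); rewrite ?lexx ?scale0r ?add0r.
Qed.

Lemma not_zero_in_hull_perp_proj N (a : 'I_N.+1 -> vec) y :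
  ~ zero_in_hull a -> (forall j, 0 < dot (a (lift ord0 j)) y) -> dot (a ord0) y <= 0 ->
  ~ zero_in_hull (fun j => perp_proj (a ord0) (a (lift ord0 j))).
Proof.
set b := a ord0 => a0 s_pos b_npos [c [c_ge0 c_sum c_comb]].
pose sg := \sum_j c j * (dot (a (lift ord0 j)) b / dot b b).
have s_comb : \sum_j c j *: a (lift ord0 j) = sg *: b.
  have : \sum_j c j *: perp_proj b (a (lift ord0 j)) = \sum_j c j *: a (lift ord0 j) - sg *: b.
    rewrite /sg scaler_suml -sumrB.
    by apply: eq_bigr => j _; rewrite scalerBr scalerA.
  by rewrite c_comb => /eqP; rewrite eq_sym subr_eq0 => /eqP.
have [sg_le0|sg_gt0] := leP sg 0.
  have sg1 : 0 < 1 - sg by lra.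
  apply: a0; apply: (@zero_in_hull_cons _ _ (- sg / (1 - sg)) (fun j => c j / (1 - sg))).
  - by rewrite divr_ge0 ?oppr_ge0 // ltW.
  - by move=> j; rewrite divr_ge0 // ltW.
  - by rewrite -mulr_suml c_sum; field; rewrite gt_eqF.
  under eq_bigr do rewrite mulrC -scalerA.
  rewrite -scaler_sumr s_comb scalerA -scalerDl.
  suff -> : - sg / (1 - sg) + (1 - sg)^-1 * sg = 0 by rewrite scale0r.
  by field; rewrite gt_eqF.
have : 0 < \sum_j c j * dot (a (lift ord0 j)) y by apply: convex_comb_gt0.
under eq_bigr do rewrite -dotvZl.
rewrite -dotv_suml s_comb dotvZl; nra.
Qed.

(* Induction on N: if the direction obtained for the tail fails on [a ord0],
   recurse on the projections of the tail orthogonally to [a ord0]. *)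
Lemma gordan_ord N (a : 'I_N -> vec) :
  ~ zero_in_hull a -> exists y, forall i, 0 < dot (a i) y.
Proof.
elim: N a => [|N IH] a a0; first by exists 0 => -[].
set b := a ord0.
have [y s_pos] := IH _ (not_zero_in_hull_lift a0).
have [b_pos|b_npos] := ltP 0 (dot b y).
  by exists y => i; case: (unliftP ord0 i) => [j ->|->]; [exact: s_pos | exact: b_pos].
have b_neq0 : b != 0 by apply: contra_notN a0 => /eqP; apply: zero_in_hull_of_eq0.
have [z pz_pos] := IH _ (not_zero_in_hull_perp_proj a0 s_pos b_npos).
pose z' := perp_proj b z.
have s_pos' j : 0 < dot (a (lift ord0 j)) z' by rewrite -dotv_perp_projC; exact: pz_pos.
have [t t_gt0 t_pos] := exists_pos_perturb (fun j => dot (a (lift ord0 j)) b) s_pos'.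
exists (z' + t *: b) => i; rewrite dotvDr dotvZr.
case: (unliftP ord0 i) => [j ->|->]; first exact: t_pos.
by rewrite dotv_perp_proj // add0r mulr_gt0 ?dotvv_gt0.
Qed.

Lemma gordan (I : finType) (a : I -> vec) :
  ~ zero_in_hull a -> exists y, forall i, 0 < dot (a i) y.
Proof.
move=> a0; have [|y y_pos] := @gordan_ord _ (fun k => a (@enum_val I I k)).
  move=> [c [c_ge0 c_sum c_comb]]; apply: a0; exists (fun i => c (enum_rank i)).
  have ev_bij : {on predT, bijective (@enum_val I I)}.
    by apply: onW_bij; exact: enum_val_bij.
  split => [i||]; first exact: c_ge0.
    by rewrite (reindex _ ev_bij); under eq_bigr do rewrite enum_valK.
  by rewrite (reindex _ ev_bij); under eq_bigr do rewrite enum_valK.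
by exists y => i; rewrite -(enum_rankK i).
Qed.

End Gordan.

Lemma mxrank_le_orthS (R : realType) (d a b : nat) (A : 'M[R]_(a, d)) (B : 'M[R]_(b, d))
    (g : 'rV[R]_d) :
  (forall u, (forall i, dotv (row i A) u = 0) -> dotv g u = 0 ->
     forall l, dotv (row l B) u = 0) ->
  (\rank B <= (\rank A).+1)%N.
Proof.
move=> orth.
have B_sub : (B <= col_mx A g)%MS.
  rewrite submxE; apply/eqP/matrixP => l k.
  have := mulmx_coker (col_mx A g); rewrite mul_col_mx -col_mx0 => /eq_col_mx [CA Cg].
  set C := cokermx _ in CA Cg *; rewrite [RHS]mxE -dotv_row_col; apply: orth => [i|].
    by rewrite dotv_row_col CA mxE.
  have -> : g = row 0 g by apply/rowP => j; rewrite mxE.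
  by rewrite dotv_row_col Cg mxE.
move: B_sub; rewrite -addsmxE => /mxrankS B_le; apply: (leq_trans B_le).
apply: leq_trans (mxrank_adds_leqif A g) _.
by rewrite -[X in (_ <= X)%N]addn1 leq_add2l rank_leq_row.
Qed.

Section Vertices.
Variables (R : realType) (d m : nat) (V : 'M[R]_(m, d)).
Local Notation dot := (@dotv R d).
Local Notation P := (conv_rows V).
Local Notation v i := (row i V).

Lemma conv_rows_row i : P (v i).
Proof.
exists (delta_mx 0 i); split; first by move=> j; rewrite mxE ler0n.
split; last exact: rowE.
rewrite (bigD1 i) //= big1 ?addr0 ?mxE ?eqxx //.
by move=> j /negPf ji; rewrite mxE ji andbF.
Qed.

Lemma conv_rows_dotv_le x y M : P x -> (forall i, dot (v i) y <= M) -> dot x y <= M.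
Proof.
move=> [w [w_ge0 [w_sum ->]]] v_le; rewrite dotv_mulmx -[M]mul1r -w_sum mulr_suml.
by apply: ler_sum => i _; rewrite ler_wpM2l.
Qed.

Lemma conv_rows_dotv_ge x y M : P x -> (forall i, M <= dot (v i) y) -> M <= dot x y.
Proof.
move=> Px v_ge; rewrite -lerN2 -dotvNr; apply: conv_rows_dotv_le => // i.
by rewrite dotvNr lerN2.
Qed.

Definition maximizing_row y i0 := forall l, dot (v l) y <= dot (v i0) y.

Definition const_dir y := forall l l', dot (v l) y = dot (v l') y.

Definition below_rows y : {set 'I_m} := [set l | [exists i, dot (v l) y < dot (v i) y]].

Definition face_mx y i0 : 'M[R]_(m, d) :=
  \matrix_i (if dot (v i) y == dot (v i0) y then v i - v i0 else 0).

Lemma face_in_row y k : maximizing_row y k -> face_in P y (v k).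
Proof. by move=> k_max; split=> [|z Pz]; [exact: conv_rows_row | apply: conv_rows_dotv_le]. Qed.

Lemma face_in0 : face_in P 0 = P.
Proof.
apply: funext => x; apply: propext; split=> [[]//|Px].
by split=> // z _; rewrite !dotv0r.
Qed.

Lemma face_in_support y i0 (w : 'rV_m) : maximizing_row y i0 ->
  (forall i, 0 <= w 0 i) -> \sum_i w 0 i = 1 -> face_in P y (w *m V) ->
  forall i, w 0 i != 0 -> dot (v i) y = dot (v i0) y.
Proof.
move=> i0_max w_ge0 w_sum [_ wV_max] i wi.
have gap_ge0 j : 0 <= w 0 j * (dot (v i0) y - dot (v j) y) by rewrite mulr_ge0 ?subr_ge0.
have gap0 : \sum_j w 0 j * (dot (v i0) y - dot (v j) y) = 0.
  apply/eqP; rewrite eq_le sumr_ge0 // andbT.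
  under eq_bigr do rewrite mulrBr.
  rewrite sumrB -mulr_suml w_sum mul1r -dotv_mulmx subr_le0.
  exact/wV_max/conv_rows_row.
have := (psumr_eq0P (fun j _ => gap_ge0 j) gap0) i isT.
by move/eqP; rewrite mulf_eq0 (negPf wi) subr_eq0 => /eqP.
Qed.

Lemma face_in_sub_face_mx y i0 x : maximizing_row y i0 -> face_in P y x ->
  exists w : 'rV_m, x - v i0 = w *m face_mx y i0.
Proof.
move=> i0_max Fx; have [[w [w_ge0 [w_sum xE]]] _] := Fx; rewrite xE in Fx.
have w_supp := face_in_support i0_max w_ge0 w_sum Fx.
exists w; rewrite xE !mulmx_sum_row.
have -> : v i0 = \sum_i w 0 i *: v i0 by rewrite -scaler_suml w_sum scale1r.
rewrite -sumrB; apply: eq_bigr => i _; rewrite rowK.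
have [->|wi] := eqVneq (w 0 i) 0; first by rewrite !scale0r subr0.
by rewrite (w_supp i wi) eqxx scalerBr.
Qed.

Lemma affdim_face_in y i0 : maximizing_row y i0 ->
  is_affdim (face_in P y) (Posz (\rank (face_mx y i0))).
Proof.
move=> i0_max; split.
  exists (v i0), (rowsub (maxrankfun (face_mx y i0)) (face_mx y i0)).
  split; first exact: face_in_row.
  split; last exact/eqP/maxrowsub_free.
  move=> i; rewrite row_rowsub rowK; case: ifP => [/eqP E|_].
    by rewrite addrC subrK; apply: face_in_row => l; rewrite E.
  by rewrite addr0; apply: face_in_row.
move=> [x0 [X [Fx0 [FX rX]]]].
suff /mxrankS : (X <= face_mx y i0)%MS by rewrite rX ltnn.
apply/row_subP => i.
have [w1 E1] := face_in_sub_face_mx i0_max (FX i).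
have [w2 E2] := face_in_sub_face_mx i0_max Fx0.
have -> : row i X = (w1 - w2) *m face_mx y i0.
  by rewrite mulmxBl -E1 -E2 opprB addrA subrK addrC addKr.
exact: submxMl.
Qed.

Lemma affdim_conv_rows i0 : is_affdim P (Posz (\rank (face_mx 0 i0))).
Proof. by rewrite -{1}face_in0; apply: affdim_face_in => l; rewrite !dotv0r. Qed.

Lemma dotv_const_dir y x i : const_dir y -> P x -> dot x y = dot (v i) y.
Proof.
move=> const Px; apply/eqP.
by rewrite eq_le (conv_rows_dotv_le Px) ?(conv_rows_dotv_ge Px) // => k; rewrite (const k i).
Qed.

Lemma row_face_mx0 i0 l : row l (face_mx 0 i0) = v l - v i0.
Proof. by rewrite rowK !dotv0r eqxx. Qed.

Lemma face_mx_orth y i0 w : (forall i, dot (row i (face_mx y i0)) w = 0) ->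
  forall i, dot (v i) y = dot (v i0) y -> dot (v i) w = dot (v i0) w.
Proof.
move=> orth i fi; have := orth i; rewrite rowK fi eqxx dotvBl.
by move=> /eqP; rewrite subr_eq0 => /eqP.
Qed.

Lemma normal_cone_face_in_rows y y' i0 : maximizing_row y i0 -> maximizing_row y' i0 ->
  (forall i, dot (v i) y = dot (v i0) y -> dot (v i) y' = dot (v i0) y') ->
  normal_cone P (face_in P y) y'.
Proof.
move=> i0_max i0_max' face_max x z Fx Pz.
have [[w [w_ge0 [w_sum xE]]] _] := Fx; rewrite xE in Fx *.
apply: (le_trans (conv_rows_dotv_le Pz i0_max')); rewrite le_eqVlt; apply/orP; left.
apply/eqP; rewrite dotv_mulmx -[LHS]mul1r -w_sum mulr_suml.
apply: eq_bigr => i _; have [->|wi] := eqVneq (w 0 i) 0; first by rewrite !mul0r.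
by rewrite (face_max i (face_in_support i0_max w_ge0 w_sum Fx wi)).
Qed.

Lemma is_facet_face_in_of_rank y i0 l : maximizing_row y i0 -> dot (v l) y < dot (v i0) y ->
  (\rank (face_mx 0 i0) <= (\rank (face_mx y i0)).+1)%N -> is_facet P (face_in P y).
Proof.
move=> i0_max l_below rank_le; split; first by right; exists y.
exists (Posz (\rank (face_mx 0 i0))); split; first exact: affdim_conv_rows.
have : (face_mx y i0 < face_mx 0 i0)%MS.
  rewrite ltmxE; apply/andP; split.
    apply/row_subP => i; rewrite rowK; case: ifP => _; last exact: sub0mx.
    by rewrite -row_face_mx0 row_sub.
  apply/negP => /(submx_trans (row_sub l _)) /submxP [w].
  rewrite row_face_mx0 => /(congr1 (dot^~ y)) /eqP.
  rewrite dotvBl dotv_mulmx big1 ?subr_eq0 ?(lt_eqF l_below) // => i _.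
  rewrite rowK; case: ifP => [/eqP fi|_]; last by rewrite dotv0l mulr0.
  by rewrite dotvBl fi subrr mulr0.
rewrite ltmxErank => /andP [_ rank_lt].
have -> : \rank (face_mx 0 i0) = (\rank (face_mx y i0)).+1 by apply/anti_leq; rewrite rank_le.
by rewrite -addn1 PoszD addrK; apply: affdim_face_in.
Qed.

Lemma in_below_rows y i0 l : maximizing_row y i0 ->
  (l \in below_rows y) = (dot (v l) y < dot (v i0) y).
Proof.
move=> i0_max; rewrite inE; apply/existsP/idP => [[i l_lt]|]; last by exists i0.
exact: lt_le_trans l_lt (i0_max i).
Qed.

Lemma below_rows_proper y y' i0 l : maximizing_row y i0 -> maximizing_row y' i0 ->
  (forall i, dot (v i) y = dot (v i0) y -> dot (v i) y' = dot (v i0) y') ->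
  dot (v l) y < dot (v i0) y -> dot (v l) y' = dot (v i0) y' ->
  (#|below_rows y'| < #|below_rows y|)%N.
Proof.
move=> i0_max i0_max' face_max l_below l_top.
apply: proper_card; apply/properP; split.
  apply/fintype.subsetP => k.
  rewrite (in_below_rows _ i0_max) (in_below_rows _ i0_max') => k_below.
  rewrite lt_neqAle i0_max andbT; apply: contraTneq k_below => /face_max ->.
  by rewrite ltxx.
exists l; first by rewrite (in_below_rows _ i0_max).
by rewrite (in_below_rows _ i0_max') l_top ltxx.
Qed.

Lemma tilt_dir y u i0 : maximizing_row y i0 ->
  (forall i, dot (v i) y = dot (v i0) y -> dot (v i) u = dot (v i0) u) ->
  (exists l, dot (v i0) u < dot (v l) u) ->
  exists t : R, [/\ maximizing_row (y + t *: u) i0,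
    forall i, dot (v i) y = dot (v i0) y -> dot (v i) (y + t *: u) = dot (v i0) (y + t *: u)
    & (#|below_rows (y + t *: u)| < #|below_rows y|)%N].
Proof.
move=> i0_max face_u [l l_up].
pose a k := dot (v k) u - dot (v i0) u.
pose b k := dot (v i0) y - dot (v k) y.
have b_ge0 k : 0 <= b k by rewrite subr_ge0.
have a_face k : dot (v k) y = dot (v i0) y -> a k = 0.
  by move=> /face_u; rewrite /a => ->; rewrite subrr.
have al_gt0 : 0 < a l by rewrite subr_gt0.
have [ls ls_up ls_min] :=
  @exists_argmin_in _ _ (fun k => 0 < a k) (fun k => b k / a k) l al_gt0.
(* The largest step keeping [i0] maximal; it lifts the row [ls] onto the face. *)
pose t := b ls / a ls.
have dot_tilt k : dot (v k) (y + t *: u) = dot (v k) y + t * dot (v k) u.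
  by rewrite dotvDr dotvZr.
have face' i : dot (v i) y = dot (v i0) y -> dot (v i) (y + t *: u) = dot (v i0) (y + t *: u).
  by move=> fi; rewrite !dot_tilt fi (face_u i fi).
have max' : maximizing_row (y + t *: u) i0.
  move=> k; rewrite !dot_tilt; suff : t * a k <= b k by rewrite /a /b mulrBr; lra.
  have [ak_gt0|ak_le0] := ltP 0 (a k); first by rewrite -ler_pdivlMr //; exact: ls_min.
  exact: le_trans (mulr_ge0_le0 (divr_ge0 (b_ge0 ls) (ltW ls_up)) ak_le0) (b_ge0 k).
have ls_below : dot (v ls) y < dot (v i0) y.
  rewrite lt_neqAle i0_max andbT; apply: contraTneq ls_up => /a_face ->.
  by rewrite ltxx.
have ls_top : dot (v ls) (y + t *: u) = dot (v i0) (y + t *: u).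
  have : t * a ls = b ls by rewrite /t divfK ?gt_eqF.
  by rewrite !dot_tilt /a /b mulrBr; lra.
by exists t; split => //; exact: below_rows_proper i0_max max' face' ls_below ls_top.
Qed.

End Vertices.

Section Ascent.
Variables (R : realType) (d n : nat) (V : 'M[R]_(n.+1, d)) (Q : set 'rV[R]_d).
Local Notation dot := (@dotv R d).
Local Notation P := (conv_rows V).
Local Notation v i := (row i V).

Hypothesis Q_min : minimizes_normal_cones P Q.

Lemma ascent_step y : sep_dir P Q y ->
  (const_dir V y \/ is_facet P (face_in P y)) \/
  exists y', sep_dir P Q y' /\ (#|below_rows V y'| < #|below_rows V y|)%N.
Proof.
move=> sep_y; have [i0 i0_max] := exists_argmax (fun i => dot (v i) y) ord0.
have [const|/existsNP [l0 /eqP l0_neq]] := pselect (forall l, dot (v l) y = dot (v i0) y).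
  by left; left => l l'; rewrite !const.
have l0_below : dot (v l0) y < dot (v i0) y by rewrite lt_neqAle l0_neq i0_max.
have [q Qq q_min] := Q_min y.
have [[u [u_face u_q u_up]]|no_tilt] := pselect (exists u,
    [/\ forall i, dot (v i) y = dot (v i0) y -> dot (v i) u = dot (v i0) u,
        dot (v i0) u = dot q u & exists l, dot (v i0) u < dot (v l) u]).
  right; have [t [max' face' lt']] := tilt_dir i0_max u_face u_up.
  exists (y + t *: u); split => // p q' Pp Qq'.
  (* [q] still minimizes the tilted direction, and the tilt does not change
     the gap between [v i0] and [q]. *)
  have cone' := normal_cone_face_in_rows i0_max max' face'.
  have := conv_rows_dotv_le Pp max'; have := q_min _ cone' _ Qq'.
  have := sep_y _ _ (conv_rows_row V i0) Qq.
  by rewrite !dotvDr !dotvZr u_q; lra.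
(* No tilt: directions orthogonal to the face and to [v i0 - q] are orthogonal
   to P, which bounds the dimension of P by that of the face plus one. *)
left; right; apply: (is_facet_face_in_of_rank i0_max l0_below).
apply: (mxrank_le_orthS (g := v i0 - q)) => w w_face w_q l.
have {}w_face := face_mx_orth w_face.
have {}w_q : dot (v i0) w = dot q w by apply/eqP; rewrite -subr_eq0 -dotvBl w_q.
rewrite row_face_mx0 dotvBl.
have [lt|gt|->] := ltgtP (dot (v l) w) (dot (v i0) w); last by rewrite subrr.
  exfalso; apply: no_tilt; exists (- w); rewrite !dotvNr; split.
  - by move=> i /w_face; rewrite !dotvNr => ->.
  - by rewrite w_q.
  - by exists l; rewrite !dotvNr ltrN2.
by exfalso; apply: no_tilt; exists w; split => //; exists l.
Qed.

Lemma ascent y : sep_dir P Q y ->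
  exists y', sep_dir P Q y' /\ (const_dir V y' \/ is_facet P (face_in P y')).
Proof.
have [N] := ubnP #|below_rows V y|; elim: N y => // N IH y /ltnSE y_N sep_y.
have [stop|[y' [sep' lt']]] := ascent_step sep_y; first by exists y.
exact: IH (leq_trans lt' y_N) sep'.
Qed.

End Ascent.

Section Facets.
Variables (R : realType) (d n : nat) (V : 'M[R]_(n.+1, d)).
Local Notation dot := (@dotv R d).
Local Notation P := (conv_rows V).
Local Notation v i := (row i V).

Lemma facet_set0_of_point : (forall l, v l = v 0) -> is_facet P set0.
Proof.
move=> point; split; first by left.
exists 0; split=> //; have := affdim_conv_rows V 0.
suff -> : face_mx V 0 0 = 0 by rewrite mxrank0.
by apply/row_matrixP => i; rewrite row_face_mx0 row0 point subrr.
Qed.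

Lemma exists_facet_dir l l' : v l != v l' -> exists z, is_facet P (face_in P z).
Proof.
move=> ll'; pose z0 := v l - v l'.
have l'_lt : dot (v l') z0 < dot (v l) z0.
  by rewrite -subr_gt0 -dotvBl dotvv_gt0 // subr_eq0.
have [i0 i0_max] := exists_argmax (fun i => dot (v i) z0) ord0.
pose q := v i0 + (v i0 - v l').
have q_min : minimizes_normal_cones P [set q] by move=> y; exists q => // y' _ q' ->.
have sep0 : sep_dir P [set q] z0.
  move=> p q' Pp ->; have := conv_rows_dotv_le Pp i0_max; have := i0_max l.
  by rewrite /q dotvDl dotvBl; lra.
(* A direction constant on P would put q at the level of P. *)
have [y [sep_y [const|]]] := ascent q_min sep0; last by exists y.
have := sep_y _ q (conv_rows_row V i0) erefl.
by rewrite /q dotvDl dotvBl (const l' i0) subrr addr0 ltxx.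
Qed.

Lemma face_in_tilt y z t : const_dir V y -> 0 < t -> face_in P (y + t *: z) = face_in P z.
Proof.
move=> const t_gt0.
have const0 x : P x -> dot x y = dot (v 0) y by move=> Px; exact: dotv_const_dir.
apply: funext => x; apply: propext; split=> -[Px x_max]; split=> // x' Px'.
  by have := x_max x' Px'; rewrite !dotvDr !dotvZr !const0 // lerD2l ler_pM2l.
by rewrite !dotvDr !dotvZr !const0 // lerD2l ler_pM2l //; exact: x_max.
Qed.

End Facets.

Section Polytopes.
Variables (R : realType) (d n m : nat) (V : 'M[R]_(n.+1, d)) (W : 'M[R]_(m.+1, d)).
Local Notation dot := (@dotv R d).
Local Notation P := (conv_rows V).
Local Notation Q := (conv_rows W).

Lemma sep_dir_of_rows y : (forall i j, dot (row i V) y < dot (row j W) y) -> sep_dir P Q y.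
Proof.
move=> rows_lt p q Pp Qq.
have [i i_max] := exists_argmax (fun i => dot (row i V) y) ord0.
have [j j_min] := exists_argmin (fun j => dot (row j W) y) ord0.
apply: le_lt_trans (conv_rows_dotv_le Pp i_max) _.
exact: lt_le_trans (rows_lt i j) (conv_rows_dotv_ge Qq j_min).
Qed.

Lemma sep_dir_of_disjoint : P `&` Q = set0 -> exists y, sep_dir P Q y.
Proof.
move=> PQ0.
have [|y y_pos] := @gordan _ _ _ (fun ij : 'I_n.+1 * 'I_m.+1 => row ij.2 W - row ij.1 V).
  move=> [c [c_ge0 c_sum c_comb]].
  pose wP := \row_i \sum_j c (i, j); pose wQ := \row_j \sum_i c (i, j).
  have wPV : wP *m V = \sum_ij c ij *: row ij.1 V.
    rewrite mulmx_sum_row; under eq_bigr do rewrite mxE scaler_suml.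
    by rewrite pair_bigA; apply: eq_bigr => -[i j] _.
  have wQW : wQ *m W = \sum_ij c ij *: row ij.2 W.
    rewrite mulmx_sum_row; under eq_bigr do rewrite mxE scaler_suml.
    by rewrite exchange_big pair_bigA; apply: eq_bigr => -[i j] _.
  have wP_conv : P (wP *m V).
    exists wP; split=> [i|]; first by rewrite mxE sumr_ge0.
    split=> //; rewrite -c_sum; under eq_bigr do rewrite mxE.
    by rewrite pair_bigA; apply: eq_bigr => -[i j] _.
  have wQ_conv : Q (wQ *m W).
    exists wQ; split=> [j|]; first by rewrite mxE sumr_ge0.
    split=> //; rewrite -c_sum; under eq_bigr do rewrite mxE.
    by rewrite exchange_big pair_bigA; apply: eq_bigr => -[i j] _.
  have wPQ : wP *m V = wQ *m W.
    apply/eqP; rewrite wPV wQW eq_sym -subr_eq0 -sumrB; apply/eqP; rewrite -[RHS]c_comb.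
    by apply: eq_bigr => ij _; rewrite scalerBr.
  have : (P `&` Q) (wP *m V) by split; rewrite // wPQ.
  by rewrite PQ0.
by exists y; apply: sep_dir_of_rows => i j; have := y_pos (i, j); rewrite dotvBl subr_gt0.
Qed.

Lemma sep_dir_perturb y z : sep_dir P Q y -> exists2 t, 0 < t & sep_dir P Q (y + t *: z).
Proof.
move=> sep_y; pose gap (ij : 'I_n.+1 * 'I_m.+1) := row ij.2 W - row ij.1 V.
have gap_pos ij : 0 < dot (gap ij) y.
  by rewrite dotvBl subr_gt0; apply: sep_y; apply: conv_rows_row.
have [t t_gt0 t_pos] := exists_pos_perturb (fun ij => dot (gap ij) z) gap_pos.
exists t => //; apply: sep_dir_of_rows => i j.
by have := t_pos (i, j); rewrite -dotvZr -dotvDr dotvBl subr_gt0.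
Qed.

Lemma strictly_separates_of_sep_dir y : sep_dir P Q y -> exists c, strictly_separates P Q y c.
Proof.
move=> sep_y.
have [i i_max] := exists_argmax (fun i => dot (row i V) y) ord0.
have [j j_min] := exists_argmin (fun j => dot (row j W) y) ord0.
have ij_lt := sep_y _ _ (conv_rows_row V i) (conv_rows_row W j).
exists ((dot (row i V) y + dot (row j W) y) / 2); split=> x.
  by move=> /conv_rows_dotv_le /(_ i_max); lra.
by move=> /conv_rows_dotv_ge /(_ j_min); lra.
Qed.

Lemma minimizes_normal_cones_of_minkowski_opp (P' : set 'rV[R]_d) :
  minkowski_equivalent P' (oppset Q) -> minimizes_normal_cones P' Q.
Proof.
move=> PQeq y.
have : normal_fan P' (normal_cone P' (face_in P' y)) by exists y.
rewrite PQeq => -[y'' cone_eq].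
have [j j_min] := exists_argmin (fun j => dot (row j W) y'') ord0.
have face_j : face_in (oppset Q) y'' (- row j W).
  split=> [|z Qz]; first by rewrite /oppset /= opprK; exact: conv_rows_row.
  by rewrite dotvNl lerNr -dotvNl; exact: conv_rows_dotv_ge Qz j_min.
exists (row j W) => [|y' cone_y' q Qq]; first exact: conv_rows_row.
rewrite cone_eq in cone_y'; have := cone_y' _ (- q) face_j.
by rewrite /oppset /= opprK !dotvNl lerN2; apply.
Qed.

Lemma sep_facet_normal y : minimizes_normal_cones P Q -> sep_dir P Q y ->
  exists y', sep_dir P Q y' /\ exists F, is_facet P F /\ normal_cone P F y'.
Proof.
move=> Q_min /(ascent Q_min) [y1 [sep1 [const|facet]]]; last first.
  by exists y1; split=> //; exists (face_in P y1); split=> //; exact: normal_cone_face_in.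
have [point|/existsNP [l /eqP l_neq]] := pselect (forall l, row l V = row 0 V).
  exists y1; split=> //; exists set0; split=> [|x z []].
  exact: facet_set0_of_point.
have [z facet_z] := exists_facet_dir l_neq.
have [t t_gt0 sep_t] := sep_dir_perturb z sep1.
exists (y1 + t *: z); split=> //; exists (face_in P z); split=> //.
by rewrite -(face_in_tilt z const t_gt0); exact: normal_cone_face_in.
Qed.

End Polytopes.

Unset Implicit Arguments.

Theorem lemma2p4 (R : realType) (d : nat) (P Q : set 'rV[R]_d) :
  is_polytope P -> is_polytope Q -> P `&` Q = set0 ->
  minkowski_equivalent P (oppset Q) ->
  exists (y : 'rV[R]_d) (c : R),
    strictly_separates P Q y c /\
    exists F : set 'rV[R]_d, is_facet P F /\ normal_cone P F y.
Proof.
move=> [n [V ->]] [m [W ->]] PQ0 PQeq.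
have [y0 sep0] := sep_dir_of_disjoint PQ0.
have Q_min := minimizes_normal_cones_of_minkowski_opp PQeq.
have [y [sep_y facet_y]] := sep_facet_normal Q_min sep0.
have [c sep_c] := strictly_separates_of_sep_dir sep_y.
by exists y, c.
Qed.
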